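(* Let $P$ be a finite set of points in $\mathbb{R}^m$ and let $(A,B)$ be an optimal 2-means partition of $P$ with $|A|\ge|B|$. Then at least $\frac{4}{7}|A|$ points of $A$ are high-revenue points (with respect to the split $P\to(A,B)$). Consequently $rev(A,B)\ge\frac{1}{35}|A||B|$.
   Context: Distances are Euclidean: $d(x,y)=\|x-y\|_2$. For finite nonempty $S$, $\rho(S)=\frac{1}{|S|}\sum_{u\in S}u$ and $\Delta_1(S)=\sum_{u\in S}d(u,\rho(S))^2$. A partition $(A,B)$ of $P$ into two nonempty sets is an optimal 2-means partition if it minimizes $\Delta_1(A)+\Delta_1(B)$ among all partitions of $P$ into two nonempty sets. For $i\in A$, $j\in B$, $rev(i,j)=\min\{d(i,j)/\max\{d(i,\rho(A)),d(j,\rho(B))\},\,1\}$ (equal to $1$ if the maximum is $0$), and $rev(A,B)=\sum_{i\in A}\sum_{j\in B}rev(i,j)$. For $u\in A$, the high-revenue set is $HR_B(u)=\{v\in B: rev(u,v)\ge\frac{1}{10}\}$ and the low-revenue set is $LR_B(u)=B\setminus HR_B(u)$. A point $u\in A$ is a high-revenue point if $|HR_B(u)|\ge\frac12|B|$, and a low-revenue point otherwise. *)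

(* Points of R^m are row vectors 'rV[R]_m over an abstract
   R : realType (the statement is then stated for every model of the reals,
   including Stdlib's R).  The finite point set P is given as the image of an
   injective map p : 'I_n -> 'rV[R]_m; subsets of P are {set 'I_n}. *)
From HB Require Import structures.
From mathcomp Require Import all_boot all_order all_algebra.
From mathcomp Require Import reals.
Set Implicit Arguments. Unset Strict Implicit. Unset Printing Implicit Defensive.
Import Order.TTheory GRing.Theory Num.Theory.
Local Open Scope ring_scope.

Section KMeans.
Variables (R : realType) (m n : nat) (p : 'I_n -> 'rV[R]_m).

Definition edist (x y : 'rV[R]_m) : R :=
  Num.sqrt (\sum_(k < m) (x 0 k - y 0 k) ^+ 2).

Definition centroid (S : {set 'I_n}) : 'rV[R]_m :=
  (#|S|%:R)^-1 *: \sum_(u in S) p u.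

Definition Delta1 (S : {set 'I_n}) : R :=
  \sum_(u in S) edist (p u) (centroid S) ^+ 2.

Definition optimal_2means (A : {set 'I_n}) : Prop :=
  [/\ A != set0, ~: A != set0 &
      forall A' : {set 'I_n}, A' != set0 -> ~: A' != set0 ->
        Delta1 A + Delta1 (~: A) <= Delta1 A' + Delta1 (~: A')].

Definition revij (A B : {set 'I_n}) (i j : 'I_n) : R :=
  let M := Num.max (edist (p i) (centroid A)) (edist (p j) (centroid B)) in
  if M == 0 then 1 else Num.min (edist (p i) (p j) / M) 1.

Definition revAB (A B : {set 'I_n}) : R :=
  \sum_(i in A) \sum_(j in B) revij A B i j.

Definition HR (A B : {set 'I_n}) (u : 'I_n) : {set 'I_n} :=
  [set v in B | 10%:R^-1 <= revij A B u v].

Definition high_revenue (A B : {set 'I_n}) (u : 'I_n) : bool :=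
  (#|B|%:R / 2%:R <= (#|HR A B u|%:R : R)).

End KMeans.

(* Let S be the set of low-revenue points of A and B = ~: A.
   - Optimality against single-point moves gives d(u,rho A) <= d(u,rho B) for
     u in A (and symmetrically for B).  If rev(u,v) < 1/10 for u in A, v in B,
     the triangle inequality then yields d(u,v) < d(u,rho A)/9 and
     d(u,rho B) <= (11/9) d(u,rho A).
   - Two low-revenue points u, u' have a common low-revenue partner v in B
     (their low-revenue sets both exceed |B|/2), so
     d(u,u')^2 <= (2/81)(d(u,rho A)^2 + d(u',rho A)^2).  Summing over pairs,
     the spread of S around its own centroid is at most 2/81 of its spread X
     around rho A, so by the parallel axis theorem |S| d(rho S,rho A)^2 is at
     least (79/81) X.
   - Optimality against moving all of S into B gives, with the parallel axis
     theorem, X + (|S|/|A \ S|) |S| d(rho S,rho A)^2 <= (121/81) X; comparing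
     the two estimates gives 79|S| <= 40|A \ S|, so |S| <= (3/7)|A|.
   Every high-revenue point contributes at least |B|/20 to rev(A,B), whence
   rev(A,B) >= (4/7)|A| |B|/20 = |A||B|/35. *)
From HB Require Import structures.
From mathcomp Require Import all_boot all_order all_algebra.
From mathcomp Require Import reals.
From mathcomp Require Import ring lra.
Set Implicit Arguments. Unset Strict Implicit. Unset Printing Implicit Defensive.
Import Order.TTheory GRing.Theory Num.Theory.
Local Open Scope ring_scope.

Section EuclideanGeometry.
Variables (R : realType) (m : nat).

Definition sqdist (x y : 'rV[R]_m) : R := \sum_(k < m) (x 0 k - y 0 k) ^+ 2.

Lemma sqdist_ge0 (x y : 'rV[R]_m) : 0 <= sqdist x y.
Proof. by apply: sumr_ge0 => k _; exact: sqr_ge0. Qed.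

Lemma sqdistC (x y : 'rV[R]_m) : sqdist x y = sqdist y x.
Proof. by apply: eq_bigr => k _; rewrite -sqrrN opprB. Qed.

Lemma sqdistxx (x : 'rV[R]_m) : sqdist x x = 0.
Proof. by apply: big1 => k _; rewrite subrr expr0n. Qed.

Lemma edist_sqr (x y : 'rV[R]_m) : edist x y ^+ 2 = sqdist x y.
Proof. by rewrite /edist sqr_sqrtr // sqdist_ge0. Qed.

Lemma edist_ge0 (x y : 'rV[R]_m) : 0 <= edist x y.
Proof. exact: sqrtr_ge0. Qed.

Lemma edistC (x y : 'rV[R]_m) : edist x y = edist y x.
Proof. by rewrite /edist -/(sqdist x y) sqdistC. Qed.

Lemma edist_le (x y x' y' : 'rV[R]_m) :
  sqdist x y <= sqdist x' y' -> edist x y <= edist x' y'.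
Proof. exact: ler_wsqrtr. Qed.

Lemma sum_sqr_eq0 (f : 'I_m -> R) : \sum_k f k ^+ 2 = 0 -> forall k, f k = 0.
Proof.
move=> /eqP; rewrite psumr_eq0 => [/allP f0 k|k _]; last exact: sqr_ge0.
by have := f0 k (mem_index_enum k); rewrite /= sqrf_eq0 => /eqP.
Qed.

Lemma cauchy_schwarz (f g : 'I_m -> R) :
  \sum_k f k * g k <= Num.sqrt (\sum_k f k ^+ 2) * Num.sqrt (\sum_k g k ^+ 2).
Proof.
set F := \sum_k f k ^+ 2; set G := \sum_k g k ^+ 2; set S := \sum_k f k * g k.
set a := Num.sqrt F; set b := Num.sqrt G.
have aF : a ^+ 2 = F by rewrite sqr_sqrtr // sumr_ge0 // => k _; exact: sqr_ge0.
have bG : b ^+ 2 = G by rewrite sqr_sqrtr // sumr_ge0 // => k _; exact: sqr_ge0.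
(* expanding 0 <= sum_k (f k b - g k a)^2 gives  a b S <= (a b)^2 *)
have expand : \sum_k (f k * b - g k * a) ^+ 2 = 2 * (a * b) * (a * b - S).
  transitivity (\sum_k (f k ^+ 2 * b ^+ 2 + g k ^+ 2 * a ^+ 2 - 2 * a * b * (f k * g k))).
    by apply: eq_bigr => k _; ring.
  rewrite sumrB big_split /= -!mulr_suml -mulr_sumr -/F -/G -/S -aF -bG; ring.
have sq_ge0 : 0 <= \sum_k (f k * b - g k * a) ^+ 2.
  by apply: sumr_ge0 => k _; exact: sqr_ge0.
have [ab0|ab_neq0] := eqVneq (a * b) 0.
  rewrite ab0 le_eqVlt; apply/orP; left; apply/eqP; apply: big1 => k _.
  move/eqP: ab0; rewrite mulf_eq0 => /orP[] /eqP z.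
    by rewrite (@sum_sqr_eq0 f _ k) ?mul0r // -/F -aF z expr0n.
  by rewrite (@sum_sqr_eq0 g _ k) ?mulr0 // -/G -bG z expr0n.
have ab_gt0 : 0 < a * b by rewrite lt_def ab_neq0 mulr_ge0 ?sqrtr_ge0.
rewrite expand in sq_ge0; nra.
Qed.

Lemma edist_triangle (x y z : 'rV[R]_m) : edist x z <= edist x y + edist y z.
Proof.
rewrite -(ler_pXn2r (n := 2)) ?nnegrE ?addr_ge0 ?edist_ge0 //.
rewrite sqrrD !edist_sqr.
have cs := cauchy_schwarz (fun k => x 0 k - y 0 k) (fun k => y 0 k - z 0 k).
have -> : sqdist x z = sqdist x y + sqdist y z
                       + 2 * \sum_k (x 0 k - y 0 k) * (y 0 k - z 0 k).
  by rewrite /sqdist mulr_sumr -!big_split /=; apply: eq_bigr => k _; ring.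
by rewrite /edist; lra.
Qed.

End EuclideanGeometry.

Section Centroids.
Variables (R : realType) (m n : nat) (p : 'I_n -> 'rV[R]_m).

Lemma centroidE (S : {set 'I_n}) k :
  centroid p S 0 k = #|S|%:R^-1 * \sum_(u in S) p u 0 k.
Proof. by rewrite /centroid mxE summxE. Qed.

Lemma centroid1 (u : 'I_n) : centroid p [set u] = p u.
Proof. by rewrite /centroid big_set1 cards1 invr1 scale1r. Qed.

Lemma Delta1E (S : {set 'I_n}) :
  Delta1 p S = \sum_(u in S) sqdist (p u) (centroid p S).
Proof. by apply: eq_bigr => u _; rewrite edist_sqr. Qed.

Lemma sum_mean (S : {set 'I_n}) (f : 'I_n -> R) :
  \sum_(v in S) f v = #|S|%:R * (#|S|%:R^-1 * \sum_(v in S) f v).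
Proof.
have [/eqP|S_neq0] := eqVneq #|S| 0%N.
  by rewrite cards_eq0 => /eqP ->; rewrite big_set0 !mulr0.
by rewrite mulrA mulfV ?mul1r // pnatr_eq0.
Qed.

Lemma parallel_axis1 (S : {set 'I_n}) (f : 'I_n -> R) (z : R) :
  \sum_(u in S) (f u - z) ^+ 2 =
  \sum_(u in S) (f u - #|S|%:R^-1 * \sum_(v in S) f v) ^+ 2
  + #|S|%:R * (#|S|%:R^-1 * \sum_(v in S) f v - z) ^+ 2.
Proof.
have := sum_mean S f.
set t := #|S|%:R; set F := \sum_(v in S) f v; set c := t^-1 * F => Fc.
transitivity (\sum_(u in S) ((f u - c) ^+ 2
                             + (2 * (c - z) * f u + ((c - z) ^+ 2 - 2 * (c - z) * c)))).
  by apply: eq_bigr => u _; ring.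
rewrite !big_split /= -mulr_sumr !sumr_const -/F Fc.
rewrite -[_ *+ #|S|]mulr_natr -[_ *+ #|S|]mulr_natr -/t; ring.
Qed.

Lemma parallel_axis (S : {set 'I_n}) z :
  \sum_(u in S) sqdist (p u) z =
  \sum_(u in S) sqdist (p u) (centroid p S) + #|S|%:R * sqdist (centroid p S) z.
Proof.
rewrite /sqdist exchange_big [X in X + _]exchange_big mulr_sumr -big_split /=.
by apply: eq_bigr => k _; rewrite centroidE; exact: parallel_axis1.
Qed.

Lemma sum_pairwise_sqdist (S : {set 'I_n}) :
  \sum_(u' in S) \sum_(u in S) sqdist (p u) (p u')
  = 2 * #|S|%:R * \sum_(u in S) sqdist (p u) (centroid p S).
Proof.
under eq_bigr => u' _ do rewrite parallel_axis.
rewrite big_split /= sumr_const -mulr_sumr.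
under [X in _ + _ * X]eq_bigr => u' _ do rewrite sqdistC.
rewrite -mulr_natr; ring.
Qed.

Lemma centroid_shift (A S : {set 'I_n}) : S \subset A -> S != set0 ->
  A :\: S != set0 ->
  #|A :\: S|%:R * sqdist (centroid p (A :\: S)) (centroid p A)
  = (#|S|%:R ^+ 2 / #|A :\: S|%:R) * sqdist (centroid p S) (centroid p A).
Proof.
move=> SA S0 AS0.
have AIS : A :&: S = S by apply/setIidPr.
have cardA : #|A| = (#|S| + #|A :\: S|)%N by rewrite -{1}AIS cardsID.
have : (0 : R) < #|S|%:R by rewrite ltr0n card_gt0.
have : (0 : R) < #|A :\: S|%:R by rewrite ltr0n card_gt0.
rewrite /sqdist !mulr_sumr; move=> al_gt0 t_gt0; apply: eq_bigr => k _.
rewrite !centroidE [\sum_(u in A) _](big_setID S) /= AIS cardA natrD.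
move: t_gt0 al_gt0; set t := (#|S|%:R : R); set al := (#|A :\: S|%:R : R) => t_gt0 al_gt0.
by field; rewrite !gt_eqF ?addr_gt0.
Qed.

End Centroids.

Section Optimality.
Variables (R : realType) (m n : nat) (p : 'I_n -> 'rV[R]_m).

Definition optimal_cut (X : {set 'I_n}) : Prop :=
  forall X' : {set 'I_n}, X' != set0 -> ~: X' != set0 ->
    Delta1 p X + Delta1 p (~: X) <= Delta1 p X' + Delta1 p (~: X').

Lemma optimal_cutC (X : {set 'I_n}) : optimal_cut X -> optimal_cut (~: X).
Proof. by move=> opt X' X'0 CX'0; rewrite setCK addrC; exact: opt. Qed.

(* Moving a proper nonempty part T of X to the other cluster cannot help:
   what T loses around rho X (plus the shift of the centroid of the rest) is
   at most what T pays around the other centroid. *)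
Lemma move_set_cost (X T : {set 'I_n}) : optimal_cut X -> T \subset X ->
  T != set0 -> X :\: T != set0 ->
  \sum_(u in T) sqdist (p u) (centroid p X)
  + #|X :\: T|%:R * sqdist (centroid p (X :\: T)) (centroid p X)
  <= \sum_(u in T) sqdist (p u) (centroid p (~: X)).
Proof.
move=> opt TX T0 XT0.
have CXT0 : ~: (X :\: T) != set0.
  by case/set0Pn: T0 => t tT; apply/set0Pn; exists t; rewrite !inE tT.
have := opt _ XT0 CXT0.
have costX : Delta1 p X = \sum_(u in T) sqdist (p u) (centroid p X)
   + (Delta1 p (X :\: T) + #|X :\: T|%:R * sqdist (centroid p (X :\: T)) (centroid p X)).
  have XIT : X :&: T = T by apply/setIidPr.
  by rewrite Delta1E (big_setID T) /= XIT Delta1E (parallel_axis p (X :\: T) (centroid p X)).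
have CXT_I : ~: (X :\: T) :&: T = T.
  by apply/setP => i; rewrite !inE; case: (i \in T); rewrite ?andbF.
have CXT_D : ~: (X :\: T) :\: T = ~: X.
  apply/setP => i; rewrite !inE; case: (boolP (i \in T)) => //= iT.
  by rewrite (subsetP TX i iT).
have costCXT : Delta1 p (~: (X :\: T))
               <= Delta1 p (~: X) + \sum_(u in T) sqdist (p u) (centroid p (~: X)).
  have := parallel_axis p (~: (X :\: T)) (centroid p (~: X)).
  rewrite (big_setID T) /= CXT_I CXT_D -!Delta1E.
  have : 0 <= #|~: (X :\: T)|%:R * sqdist (centroid p (~: (X :\: T))) (centroid p (~: X)).
    by rewrite mulr_ge0 ?sqdist_ge0.
  lra.
lra.
Qed.

Lemma move_point_cost (X : {set 'I_n}) u : optimal_cut X -> u \in X ->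
  sqdist (p u) (centroid p X) <= sqdist (p u) (centroid p (~: X)).
Proof.
move=> opt uX.
have [->|X_neq1] := eqVneq X [set u]; first by rewrite centroid1 sqdistxx sqdist_ge0.
have Xu0 : X :\: [set u] != set0.
  by apply: contra X_neq1; rewrite setD_eq0 => sub; rewrite eqEsubset sub sub1set uX.
have u0 : [set u] != set0 by apply/set0Pn; exists u; rewrite set11.
have := @move_set_cost X [set u] opt; rewrite sub1set => /(_ uX u0 Xu0).
rewrite !big_set1.
have : 0 <= #|X :\: [set u]|%:R * sqdist (centroid p (X :\: [set u])) (centroid p X).
  by rewrite mulr_ge0 ?sqdist_ge0.
lra.
Qed.

End Optimality.

Section Revenue.
Variables (R : realType) (m n : nat) (p : 'I_n -> 'rV[R]_m).

Lemma revij_ge0 (A B : {set 'I_n}) u v : 0 <= revij p A B u v.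
Proof.
rewrite /revij; case: eqP => // _.
by rewrite le_min ler01 andbT divr_ge0 ?le_max ?edist_ge0.
Qed.

Lemma revij_low (A B : {set 'I_n}) u v : ~~ (10%:R^-1 <= revij p A B u v) ->
  edist (p u) (p v)
  < Num.max (edist (p u) (centroid p A)) (edist (p v) (centroid p B)) / 10%:R.
Proof.
rewrite /revij; set M := Num.max _ _.
have M_ge0 : 0 <= M by rewrite le_max edist_ge0.
have inv10_le1 : (10%:R : R)^-1 <= 1 by rewrite invf_le1 ?ltr0n // ler1n.
case: eqP => [_|M_neq0]; first by rewrite inv10_le1.
have M_gt0 : 0 < M by rewrite lt_def M_ge0 andbT; apply/eqP.
rewrite -ltNge gt_min => /orP[|]; last by lra.
by rewrite ltr_pdivrMr // ltr_pdivlMr //; lra.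
Qed.

Lemma high_revenue_row (A B : {set 'I_n}) u : high_revenue p A B u ->
  #|B|%:R / 20%:R <= \sum_(j in B) revij p A B u j.
Proof.
rewrite /high_revenue => high.
have BIHR : B :&: HR p A B u = HR p A B u.
  by apply/setIidPr; apply/subsetP => x; rewrite inE => /andP[].
rewrite (big_setID (HR p A B u)) /= BIHR.
have : 0 <= \sum_(j in B :\: HR p A B u) revij p A B u j.
  by apply: sumr_ge0 => j _; exact: revij_ge0.
have : \sum_(j in HR p A B u) (10%:R^-1 : R) <= \sum_(j in HR p A B u) revij p A B u j.
  by apply: ler_sum => j; rewrite inE => /andP[].
rewrite sumr_const -mulr_natr; lra.
Qed.

Lemma revAB_ge_high (A B : {set 'I_n}) :
  #|[set u in A | high_revenue p A B u]|%:R * #|B|%:R / 20%:R <= revAB p A B.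
Proof.
set H := [set u in A | high_revenue p A B u].
have AIH : A :&: H = H by apply/setIidPr; apply/subsetP => x; rewrite inE => /andP[].
rewrite /revAB (big_setID H) /= AIH.
have : 0 <= \sum_(i in A :\: H) \sum_(j in B) revij p A B i j.
  by apply: sumr_ge0 => i _; apply: sumr_ge0 => j _; exact: revij_ge0.
have : \sum_(i in H) (#|B|%:R / 20%:R : R) <= \sum_(i in H) \sum_(j in B) revij p A B i j.
  by apply: ler_sum => i; rewrite inE => /andP[_ /high_revenue_row].
rewrite sumr_const -mulr_natr; lra.
Qed.

End Revenue.

(* The arithmetic core of the low-revenue estimate: r, s are the distances of
   u, v to their own centroids, r', w to the other ones, e = d(u,v). *)
Lemma close_pair_bound (R : realFieldType) (r s e r' w : R) :
  0 <= r -> 0 <= s -> 0 <= e -> r <= r' -> s <= w ->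
  w <= e + r -> r' <= e + s -> e < Num.max r s / 10%:R ->
  e < r / 9%:R /\ r' <= 11%:R / 9%:R * r.
Proof. by do 7!move=> ?; rewrite maxEle; case: ifP => *; lra. Qed.

(* The arithmetic core of the counting estimate: t = |S|, al = |A \ S|,
   X, V, Y the spreads of S around rho A, rho S, rho B and W the squared
   distance from rho S to rho A. *)
Lemma moved_mass_bound (R : realFieldType) (t al X V W Y : R) :
  0 < t -> 0 < al -> 0 < X -> V <= 2%:R / 81%:R * X -> X = V + t * W ->
  Y <= 121%:R / 81%:R * X -> X + t ^+ 2 / al * W <= Y ->
  79%:R * t <= 40%:R * al.
Proof.
move=> t_gt0 al_gt0 X_gt0 VX XVW YX move.
set k := t / al.
have k_ge0 : 0 <= k by rewrite divr_ge0 ?ltW.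
have kt : t ^+ 2 / al * W = k * (t * W) by rewrite /k; field; rewrite gt_eqF.
have tk : t = k * al by rewrite /k; field; rewrite gt_eqF.
rewrite kt in move.
have : k * (79%:R / 81%:R * X) <= k * (t * W) by rewrite ler_wpM2l //; lra.
have : (k * 79%:R) * X <= 40%:R * X by nra.
rewrite ler_pM2r // => k79; rewrite tk; nra.
Qed.

Section LowRevenue.
Variables (R : realType) (m n : nat) (p : 'I_n -> 'rV[R]_m) (A : {set 'I_n}).
Hypotheses (optA : optimal_cut p A) (optB : optimal_cut p (~: A)).

Definition low_revenue (u : 'I_n) : bool :=
  (u \in A) && ~~ high_revenue p A (~: A) u.

(* Two low-revenue points have a common partner of low revenue with both:
   their low-revenue sets each hold more than half of ~: A. *)
Lemma low_revenue_partner u u' : low_revenue u -> low_revenue u' ->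
  exists v, [/\ v \in ~: A, ~~ (10%:R^-1 <= revij p A (~: A) u v)
              & ~~ (10%:R^-1 <= revij p A (~: A) u' v)].
Proof.
pose LR w := ~: A :\: HR p A (~: A) w.
have cardLR w : low_revenue w -> #|~: A|%:R / 2%:R < (#|LR w|%:R : R).
  rewrite /low_revenue /high_revenue -ltNge => /andP[_ low].
  have : (#|HR p A (~: A) w| + #|LR w|)%N = #|~: A|.
    have <- : ~: A :&: HR p A (~: A) w = HR p A (~: A) w.
      by apply/setIidPr; apply/subsetP => x; rewrite inE => /andP[].
    exact: cardsID.
  move/(congr1 (fun k => k%:R : R)); rewrite natrD; lra.
move=> /cardLR low_u /cardLR low_u'.
have : (#|LR u :|: LR u'|%:R : R) <= #|~: A|%:R.
  by rewrite ler_nat subset_leq_card // subUset !subsetDl.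
have : (#|LR u :|: LR u'|%:R + #|LR u :&: LR u'|%:R : R) = #|LR u|%:R + #|LR u'|%:R.
  by rewrite -!natrD cardsUI.
move=> UI U; have : (0 : R) < #|LR u :&: LR u'|%:R by lra.
rewrite ltr0n card_gt0 => /set0Pn[v]; rewrite !inE.
move=> /andP[/andP[low_uv vB] /andP[low_u'v _]].
by exists v; rewrite inE vB; split; [| move: low_uv | move: low_u'v]; rewrite ?vB.
Qed.

Lemma low_pair_bound u v : u \in A -> v \in ~: A ->
  ~~ (10%:R^-1 <= revij p A (~: A) u v) ->
  edist (p u) (p v) < edist (p u) (centroid p A) / 9%:R /\
  edist (p u) (centroid p (~: A)) <= 11%:R / 9%:R * edist (p u) (centroid p A).
Proof.
move=> uA vB low.
apply: (@close_pair_bound _ _ (edist (p v) (centroid p (~: A))) _ _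
                            (edist (p v) (centroid p A))); rewrite ?edist_ge0 //.
- exact/edist_le/move_point_cost.
- by apply/edist_le; have := move_point_cost optB vB; rewrite setCK.
- by rewrite (edistC (p u)); exact: edist_triangle.
- exact: edist_triangle.
- exact: revij_low.
Qed.

Lemma low_revenue_sqdist u : low_revenue u ->
  0 < sqdist (p u) (centroid p A) /\
  sqdist (p u) (centroid p (~: A)) <= 121%:R / 81%:R * sqdist (p u) (centroid p A).
Proof.
move=> low; have [v [vB low_uv _]] := low_revenue_partner low low.
have [close far] := low_pair_bound (proj1 (andP low)) vB low_uv.
have := edist_ge0 (p u) (p v); have := edist_ge0 (p u) (centroid p (~: A)).
rewrite -!edist_sqr; move: close far.
set r := edist _ (centroid p A); set r' := edist _ (centroid p (~: A)).
move=> close far r'_ge0 e_ge0; have r_gt0 : 0 < r by lra.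
split; first by rewrite exprn_gt0.
have : r' ^+ 2 <= (11%:R / 9%:R * r) ^+ 2 by rewrite ler_pXn2r ?nnegrE //; lra.
by rewrite exprMn; lra.
Qed.

(* Low-revenue points are close to each other, via their common partner. *)
Lemma low_revenue_pair_sqdist u u' : low_revenue u -> low_revenue u' ->
  sqdist (p u) (p u')
  <= 2%:R / 81%:R * (sqdist (p u) (centroid p A) + sqdist (p u') (centroid p A)).
Proof.
move=> low low'; have [v [vB low_uv low_u'v]] := low_revenue_partner low low'.
have [close _] := low_pair_bound (proj1 (andP low)) vB low_uv.
have [close' _] := low_pair_bound (proj1 (andP low')) vB low_u'v.
have := edist_triangle (p u) (p v) (p u'); rewrite (edistC (p v)).
have := edist_ge0 (p u) (p v); have := edist_ge0 (p u') (p v).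
have := edist_ge0 (p u) (p u').
rewrite -!edist_sqr; move: close close'.
set r := edist (p u) (centroid p A); set r' := edist (p u') (centroid p A).
set d := edist (p u) (p u').
move=> close close' d_ge0 e'_ge0 e_ge0 tri.
have : d ^+ 2 <= ((r + r') / 9%:R) ^+ 2 by rewrite ler_pXn2r ?nnegrE //; lra.
have := sqr_ge0 (r - r'); rewrite expr_div_n; lra.
Qed.

Lemma low_revenue_spread (S : {set 'I_n}) : {in S, forall u, low_revenue u} ->
  \sum_(u in S) sqdist (p u) (centroid p S)
  <= 2%:R / 81%:R * \sum_(u in S) sqdist (p u) (centroid p A).
Proof.
move=> lowS; set V := \sum_(u in S) _; set X := \sum_(u in S) _.
set c := (2%:R / 81%:R : R); set t := (#|S|%:R : R).
have pairs : \sum_(u' in S) \sum_(u in S) sqdist (p u) (p u') <=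
    \sum_(u' in S) \sum_(u in S) c * (sqdist (p u) (centroid p A) + sqdist (p u') (centroid p A)).
  apply: ler_sum => u' u'S; apply: ler_sum => u uS.
  exact: low_revenue_pair_sqdist (lowS u uS) (lowS u' u'S).
have double : \sum_(u' in S) \sum_(u in S)
    c * (sqdist (p u) (centroid p A) + sqdist (p u') (centroid p A)) = c * (2 * t * X).
  under eq_bigr => u' _ do rewrite -mulr_sumr big_split /= sumr_const -/X.
  rewrite -big_distrr /= big_split /= sumr_const sumrMnl -/X -[X *+ _]mulr_natr -/t; ring.
rewrite sum_pairwise_sqdist -/V -/t double in pairs.
have [t0|t_neq0] := eqVneq t 0.
  have S0 : S = set0 by apply/eqP; rewrite -cards_eq0 -(eqr_nat R) -/t t0.
  by rewrite /V /X S0 !big_set0 mulr0.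
have t_gt0 : 0 < 2 * t by rewrite mulr_gt0 // lt_def t_neq0 ler0n.
by rewrite -(ler_pM2l t_gt0); lra.
Qed.

Lemma low_revenue_count (S : {set 'I_n}) : {in S, forall u, low_revenue u} ->
  7%:R * (#|S|%:R : R) <= 3%:R * #|A|%:R.
Proof.
move=> lowS.
have [->|S0] := eqVneq S set0; first by rewrite cards0 mulr0 mulr_ge0 ?ler0n.
have SA : S \subset A by apply/subsetP => u /lowS /andP[].
set X := \sum_(u in S) sqdist (p u) (centroid p A).
have spread := low_revenue_spread lowS; rewrite -/X in spread.
have XVW := parallel_axis p S (centroid p A); rewrite -/X in XVW.
have X_gt0 : 0 < X.
  case/set0Pn: S0 => u uS; rewrite /X (big_setD1 u) //=.
  have [pos _] := low_revenue_sqdist (lowS u uS).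
  by rewrite ltr_pwDl // sumr_ge0 // => i _; exact: sqdist_ge0.
have AS0 : A :\: S != set0.
  apply/negP; rewrite setD_eq0 => AS.
  have SA' : centroid p S = centroid p A by congr centroid; apply/eqP; rewrite eqEsubset SA.
  by move: XVW spread; rewrite SA' sqdistxx mulr0 addr0 -/X; lra.
have YX : \sum_(u in S) sqdist (p u) (centroid p (~: A)) <= 121%:R / 81%:R * X.
  rewrite /X mulr_sumr; apply: ler_sum => u uS.
  by have [_ far] := low_revenue_sqdist (lowS u uS).
have move := move_set_cost optA SA S0 AS0; rewrite centroid_shift // -/X in move.
have AIS : A :&: S = S by apply/setIidPr.
have cardA : #|A| = (#|S| + #|A :\: S|)%N by rewrite -{1}AIS cardsID.
rewrite cardA natrD.
have := moved_mass_bound _ _ X_gt0 spread XVW YX move.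
have al_ge0 : (0 : R) <= #|A :\: S|%:R := ler0n _ _.
by rewrite !ltr0n !card_gt0 S0 AS0 => /(_ isT isT); lra.
Qed.

End LowRevenue.

Theorem mainTheorem3 (R : realType) (m n : nat) (p : 'I_n -> 'rV[R]_m)
  (p_inj : injective p) (A : {set 'I_n}) :
  optimal_2means p A -> (#|~: A| <= #|A|)%N ->
  (4%:R / 7%:R) * #|A|%:R <= (#|[set u in A | high_revenue p A (~: A) u]|%:R : R)
  /\ (35%:R)^-1 * #|A|%:R * #|~: A|%:R <= revAB p A (~: A).
Proof.
move=> [_ _ opt] _; have optA : optimal_cut p A := opt.
have optB := optimal_cutC optA.
set H := [set u in A | high_revenue p A (~: A) u].
have lowS : {in A :\: H, forall u, low_revenue p A u}.
  by move=> u; rewrite !inE /low_revenue => /andP[notH uA]; move: notH; rewrite uA.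
have count := low_revenue_count optA optB lowS.
have AIH : A :&: H = H by apply/setIidPr; apply/subsetP => u; rewrite inE => /andP[].
have cardA : #|A| = (#|H| + #|A :\: H|)%N by rewrite -{1}AIH cardsID.
have highA : (4%:R / 7%:R) * #|A|%:R <= (#|H|%:R : R).
  by move: count; rewrite cardA natrD; lra.
split => //.
have : (4%:R / 7%:R * #|A|%:R) * #|~: A|%:R <= (#|H|%:R : R) * #|~: A|%:R.
  by rewrite ler_wpM2r ?ler0n.
have := revAB_ge_high p A (~: A); lra.
Qed.
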